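(* Let $\Pi$ be the topological prismatoid \#1963 of Criado and Santos: a polyhedral $4$-sphere on the $14$ vertices $0,1,2,3,4,5,6,a,b,c,d,e,f,g$ whose simplicial facets are exactly the following $4$-simplices (each string lists the five vertices of a facet): 015cf, 0245f, 0256g, 025ce, 025cg, 06bcf, 125cf, 25bce, 0123d, 0126d, 0134e, 013ae, 013af, 013bd, 013bg, 013cf, 013cg, 0145f, 014ae, 014af, 0156g, 015cg, 016bd, 016bg, 0234e, 023bd, 023be, 024ae, 024af, 025ae, 025af, 026bd, 026be, 026ce, 026cg, 03abe, 03abf, 03bcf, 03bcg, 05ace, 05acf, 06abe, 06abf, 06ace, 06acf, 06bcg, 1234e, 123bd, 123be, 1245f, 124ac, 124af, 124bd, 124be, 124cd, 1256g, 125cg, 126cd, 126cg, 12acf, 13abe, 13abg, 13acf, 13acg, 14abe, 14abg, 14acg, 14bcd, 14bcg, 16bcd, 16bcg, 24abd, 24abe, 24acd, 25abd, 25abe, 25acd, 25acf, 25bcd, 26bcd, 26bce, 3abfg, 3acfg, 3bcfg, 4abcd, 4abcg, 5abde, 5acde, 5bcde, 6abef, 6acef, 6bcef, and which in addition has exactly two non-simplicial facets, its two bases, with vertex sets $\{0,1,\dots,6\}$ and $\{a,b,\dots,g\}$. Then $\Pi$ is not realizable: there is no convex $5$-polytope whose boundary complex is combinatorially isomorphic to $\Pi$.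
   Context: A topological prismatoid (Criado–Santos) is a combinatorial abstraction of a geometric prismatoid, i.e. of a polytope all of whose vertices lie in two parallel facets (the bases); all other facets are here simplices. *)

From HB Require Import structures.
From mathcomp Require Import all_boot all_order all_algebra.
From mathcomp Require Import reals.
Set Implicit Arguments. Unset Strict Implicit. Unset Printing Implicit Defensive.
Import Order.TTheory GRing.Theory Num.Theory.
Local Open Scope ring_scope.

(* Vertex labelling: 0,...,6 are 0,...,6 and a,b,...,g are 7,8,...,13. *)
Definition simplicial_facets : seq (seq nat) :=
  [:: [:: 0; 1; 5; 9; 12];
      [:: 0; 2; 4; 5; 12];
      [:: 0; 2; 5; 6; 13];
      [:: 0; 2; 5; 9; 11];
      [:: 0; 2; 5; 9; 13];
      [:: 0; 6; 8; 9; 12];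
      [:: 1; 2; 5; 9; 12];
      [:: 2; 5; 8; 9; 11];
      [:: 0; 1; 2; 3; 10];
      [:: 0; 1; 2; 6; 10];
      [:: 0; 1; 3; 4; 11];
      [:: 0; 1; 3; 7; 11];
      [:: 0; 1; 3; 7; 12];
      [:: 0; 1; 3; 8; 10];
      [:: 0; 1; 3; 8; 13];
      [:: 0; 1; 3; 9; 12];
      [:: 0; 1; 3; 9; 13];
      [:: 0; 1; 4; 5; 12];
      [:: 0; 1; 4; 7; 11];
      [:: 0; 1; 4; 7; 12];
      [:: 0; 1; 5; 6; 13];
      [:: 0; 1; 5; 9; 13];
      [:: 0; 1; 6; 8; 10];
      [:: 0; 1; 6; 8; 13];
      [:: 0; 2; 3; 4; 11];
      [:: 0; 2; 3; 8; 10];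
      [:: 0; 2; 3; 8; 11];
      [:: 0; 2; 4; 7; 11];
      [:: 0; 2; 4; 7; 12];
      [:: 0; 2; 5; 7; 11];
      [:: 0; 2; 5; 7; 12];
      [:: 0; 2; 6; 8; 10];
      [:: 0; 2; 6; 8; 11];
      [:: 0; 2; 6; 9; 11];
      [:: 0; 2; 6; 9; 13];
      [:: 0; 3; 7; 8; 11];
      [:: 0; 3; 7; 8; 12];
      [:: 0; 3; 8; 9; 12];
      [:: 0; 3; 8; 9; 13];
      [:: 0; 5; 7; 9; 11];
      [:: 0; 5; 7; 9; 12];
      [:: 0; 6; 7; 8; 11];
      [:: 0; 6; 7; 8; 12];
      [:: 0; 6; 7; 9; 11];
      [:: 0; 6; 7; 9; 12];
      [:: 0; 6; 8; 9; 13];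
      [:: 1; 2; 3; 4; 11];
      [:: 1; 2; 3; 8; 10];
      [:: 1; 2; 3; 8; 11];
      [:: 1; 2; 4; 5; 12];
      [:: 1; 2; 4; 7; 9];
      [:: 1; 2; 4; 7; 12];
      [:: 1; 2; 4; 8; 10];
      [:: 1; 2; 4; 8; 11];
      [:: 1; 2; 4; 9; 10];
      [:: 1; 2; 5; 6; 13];
      [:: 1; 2; 5; 9; 13];
      [:: 1; 2; 6; 9; 10];
      [:: 1; 2; 6; 9; 13];
      [:: 1; 2; 7; 9; 12];
      [:: 1; 3; 7; 8; 11];
      [:: 1; 3; 7; 8; 13];
      [:: 1; 3; 7; 9; 12];
      [:: 1; 3; 7; 9; 13];
      [:: 1; 4; 7; 8; 11];
      [:: 1; 4; 7; 8; 13];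
      [:: 1; 4; 7; 9; 13];
      [:: 1; 4; 8; 9; 10];
      [:: 1; 4; 8; 9; 13];
      [:: 1; 6; 8; 9; 10];
      [:: 1; 6; 8; 9; 13];
      [:: 2; 4; 7; 8; 10];
      [:: 2; 4; 7; 8; 11];
      [:: 2; 4; 7; 9; 10];
      [:: 2; 5; 7; 8; 10];
      [:: 2; 5; 7; 8; 11];
      [:: 2; 5; 7; 9; 10];
      [:: 2; 5; 7; 9; 12];
      [:: 2; 5; 8; 9; 10];
      [:: 2; 6; 8; 9; 10];
      [:: 2; 6; 8; 9; 11];
      [:: 3; 7; 8; 12; 13];
      [:: 3; 7; 9; 12; 13];
      [:: 3; 8; 9; 12; 13];
      [:: 4; 7; 8; 9; 10];
      [:: 4; 7; 8; 9; 13];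
      [:: 5; 7; 8; 10; 11];
      [:: 5; 7; 9; 10; 11];
      [:: 5; 8; 9; 10; 11];
      [:: 6; 7; 8; 11; 12];
      [:: 6; 7; 9; 11; 12];
      [:: 6; 8; 9; 11; 12]].

Definition base_facets : seq (seq nat) :=
  [:: [:: 0; 1; 2; 3; 4; 5; 6]; [:: 7; 8; 9; 10; 11; 12; 13]].

Definition set_of_labels (s : seq nat) : {set 'I_14} :=
  [set i : 'I_14 | (val i \in s)%N].

Definition Pi_facets : seq {set 'I_14} :=
  map set_of_labels (simplicial_facets ++ base_facets).

Section Realization.
Variable R : realType.

Definition dotp (c x : 'rV[R]_5) : R := \sum_(k < 5) c 0 k * x 0 k.

(* Rows (p i, 1) for i in S (zero rows otherwise); rank = affine dim + 1. *)
Definition hom_mx (p : 'I_14 -> 'rV[R]_5) (S : {set 'I_14}) : 'M[R]_(14, 5 + 1) :=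
  \matrix_(i < 14) (if i \in S then row_mx (p i) (const_mx 1) else 0).

Definition exposed_face (p : 'I_14 -> 'rV[R]_5) (S : {set 'I_14}) : Prop :=
  exists (c : 'rV[R]_5) (d : R), c != 0 /\
    (forall i, dotp c (p i) <= d) /\ (forall i, dotp c (p i) = d <-> i \in S).

Definition is_vertex p (i : 'I_14) := exposed_face p [set i].

(* Facets of a 5-polytope: faces whose affine hull has dimension 4. *)
Definition is_facet p (S : {set 'I_14}) :=
  exposed_face p S /\ \rank (hom_mx p S) = 5%N.

(* conv(p) is a convex 5-polytope with vertex set exactly {p i}, the labelling
   i |-> p i is a bijection onto the vertices, and its facets (as vertex sets)
   are exactly the facets of Pi.  Since the face lattice of a polytope is
   determined by its vertex-facet incidences, this says the boundary complex
   of conv(p) is combinatorially isomorphic to Pi. *)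
Definition realizes_Pi (p : 'I_14 -> 'rV[R]_5) : Prop :=
  [/\ \rank (hom_mx p setT) = 6%N,
      (forall i, is_vertex p i) &
      (forall S, is_facet p S <-> S \in Pi_facets)].

End Realization.

From mathcomp Require Import all_boot all_order all_algebra.
From mathcomp Require Import reals.
From mathcomp Require Import ring lra zify.
From mathcomp Require Import perm.
Set Implicit Arguments. Unset Strict Implicit. Unset Printing Implicit Defensive.
Import Order.TTheory GRing.Theory Num.Theory Num.Def.
Local Open Scope ring_scope.

(* Suppose conv p realizes Pi, and let chi s be the determinant of the homogenised
   vertices p_s1, ..., p_s6, an alternating function of s.  Two rules constrain the
   signs of chi.  If F spans a facet and j, k are vertices off it, Cramer's rule for
   a supporting functional h of the facet gives chi (F, j) h(p_k) = chi (F, k) h(p_j)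
   with h(p_j), h(p_k) < 0, so chi (F, j) and chi (F, k) have the same sign.  And chi
   satisfies the three-term Grassmann-Pluecker relations.  Starting from a nonzero
   chi (F, j) with F a simplicial facet, these rules force the signs of about forty
   values of chi, until a Grassmann-Pluecker relation has three terms of the same
   strict sign.  This finite sign propagation is checked by computation. *)

Section Chirotope.
Variables (F : fieldType) (n : nat) (p : 'I_n.+1 -> 'rV[F]_5).

(* Points are addressed by nat labels, out-of-range labels standing for p 0 through
   inord; chi s only reads the first six entries of s. *)
Definition hpoint (i : nat) : 'rV[F]_(5 + 1) := row_mx (p (inord i)) (const_mx 1).

Definition chi (s : seq nat) : F := \det (\matrix_(k < 6) hpoint (nth 0%N s k)).

Definition heval (w : 'cV[F]_(5 + 1)) (i : nat) : F := (hpoint i *m w) 0 0.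

Definition drop_nth (k : nat) (s : seq nat) := take k s ++ drop k.+1 s.

Lemma nth_drop_nth (s : seq nat) (i : 'I_7) (k : 'I_6) : size s = 7%N ->
  nth 0%N (drop_nth i s) k = nth 0%N s (lift i k).
Proof.
move=> hs; rewrite /drop_nth nth_cat size_take hs ltn_ord /= /bump.
case: (ltnP k i) => hk; first by rewrite nth_take.
by rewrite nth_drop add1n addSn subnKC.
Qed.

Lemma chi_cramer (s : seq nat) w : size s = 7%N ->
  \sum_(k < 7) (-1) ^+ (k + 6) * chi (drop_nth k s) * heval w (nth 0%N s k) = 0.
Proof.
move=> hs.
pose V : 'M[F]_(7, 6) := \matrix_(i < 7) hpoint (nth 0%N s i).
pose A : 'M[F]_7 := row_mx V (V *m w).
have detA : \det A = 0.
  apply/eqP; apply: contraT => nz.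
  have /mxrank_unit rkA : A \in unitmx by rewrite unitmxE unitfE.
  have := mxrankM_maxl V (row_mx 1%:M w).
  by rewrite mul_mx_row mulmx1 -/A rkA (leqNgt 7) ltnS rank_leq_col.
rewrite (expand_det_col A ord_max) in detA.
rewrite -[RHS]detA; apply: eq_bigr => i _.
rewrite /cofactor [RHS]mulrC; congr (_ * _ * _).
  congr (\det _); apply/matrixP => k l.
  rewrite [RHS]mxE [RHS]mxE.
  have -> : lift ord_max l = lshift 1 l :> 'I_(6 + 1).
    by apply/val_inj => /=; rewrite /bump leqNgt ltn_ord.
  rewrite (_ : A (lift i k) (lshift 1 l) = V (lift i k) l); last exact: row_mxEl.
  by rewrite !mxE (nth_drop_nth _ _ hs).
have -> : (ord_max : 'I_7) = rshift 6 (0 : 'I_1) :> 'I_(6 + 1) by apply: val_inj.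
rewrite (_ : A i (rshift 6 0) = (V *m w) i 0); last exact: row_mxEr.
rewrite /heval !mxE; apply: eq_bigr => l _.
by rewrite !mxE.
Qed.

Lemma chi_cramer7 a0 a1 a2 a3 a4 a5 a6 w :
    chi [:: a1; a2; a3; a4; a5; a6] * heval w a0
  - chi [:: a0; a2; a3; a4; a5; a6] * heval w a1
  + chi [:: a0; a1; a3; a4; a5; a6] * heval w a2
  - chi [:: a0; a1; a2; a4; a5; a6] * heval w a3
  + chi [:: a0; a1; a2; a3; a5; a6] * heval w a4
  - chi [:: a0; a1; a2; a3; a4; a6] * heval w a5
  + chi [:: a0; a1; a2; a3; a4; a5] * heval w a6 = 0.
Proof.
have := @chi_cramer [:: a0; a1; a2; a3; a4; a5; a6] w erefl.
rewrite !big_ord_recl big_ord0 /= /bump /drop_nth /= !addnE /= => H.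
rewrite -[RHS]H !exprS expr0; ring.
Qed.

Lemma chi_swap (s t : seq nat) x y : size (s ++ x :: y :: t) = 6%N ->
  chi (s ++ y :: x :: t) = - chi (s ++ x :: y :: t).
Proof.
rewrite size_cat /= => hst; have hi : (size s < 6)%N by lia.
have hi' : ((size s).+1 < 6)%N by lia.
pose i := Ordinal hi; pose i' := Ordinal hi'.
rewrite /chi.
have -> : \matrix_(k < 6) hpoint (nth 0%N (s ++ y :: x :: t) k)
        = xrow i i' (\matrix_(k < 6) hpoint (nth 0%N (s ++ x :: y :: t) k)).
  apply/matrixP => k l; rewrite /xrow /row_perm !mxE.
  case: tpermP => [->|->|ki ki'] /=;
    try by rewrite !nth_cat ltnn subnn ltnNge leqnSn /= subSnn.
  rewrite !nth_cat; case: ltnP => // hk.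
  have k2 : (2 <= k - size s)%N.
    have : ((k : nat) != size s) && ((k : nat) != (size s).+1).
      by apply/andP; split; apply/eqP => e; [apply: ki | apply: ki']; apply: val_inj.
    by case/andP => /eqP ? /eqP ?; lia.
  by rewrite -(subnKC k2) add2n.
rewrite xrowE det_mulmx det_perm odd_tperm.
have -> : (i != i') by rewrite -val_eqE /= neq_ltn ltnSn.
by rewrite expr1 mulN1r.
Qed.

Lemma chi_eq0 (s : seq nat) (i j : 'I_6) :
  i != j -> nth 0%N s i = nth 0%N s j -> chi s = 0.
Proof.
move=> nij e; apply: (determinant_alternate nij) => l.
by rewrite !mxE e.
Qed.

Lemma chi_linear a1 a2 a3 a4 w :
  exists v, forall x, chi [:: a1; a2; a3; a4; x; w] = heval v x.
Proof.
pose M := \matrix_(k < 6) hpoint (nth 0%N [:: a1; a2; a3; a4; 0%N; w] k).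
exists (\col_j cofactor M 4 j) => x.
rewrite /chi (expand_det_row _ 4) /heval mxE; apply: eq_bigr => j _.
rewrite !mxE; congr (_ * (_ * \det _)).
by apply/matrixP => k l; rewrite !mxE; case: k => [[|[|[|[|[|k]]]]] hk].
Qed.

Lemma chi_plucker a1 a2 a3 a4 x y z w :
    chi [:: a1; a2; a3; a4; y; z] * chi [:: a1; a2; a3; a4; x; w]
  - chi [:: a1; a2; a3; a4; x; z] * chi [:: a1; a2; a3; a4; y; w]
  + chi [:: a1; a2; a3; a4; x; y] * chi [:: a1; a2; a3; a4; z; w] = 0.
Proof.
have [v hv] := chi_linear a1 a2 a3 a4 w.
have := chi_cramer7 a1 a2 a3 a4 x y z v; rewrite -!hv.
rewrite (@chi_eq0 [:: a1; a2; a3; a4; a1; w] 0 4) //.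
rewrite (@chi_eq0 [:: a1; a2; a3; a4; a2; w] 1 4) //.
rewrite (@chi_eq0 [:: a1; a2; a3; a4; a3; w] 2 4) //.
rewrite (@chi_eq0 [:: a1; a2; a3; a4; a4; w] 3 4) //.
by rewrite !mulr0 => h; rewrite -[RHS]h; ring.
Qed.

End Chirotope.

Section AlternatingSort.

Fixpoint insert_sgn (x : nat) (s : seq nat) : seq nat * bool :=
  if s is y :: s' then
    if (x <= y)%N then (x :: s, false)
    else let u := insert_sgn x s' in (y :: u.1, ~~ u.2)
  else ([:: x], false).

Fixpoint sort_sgn (s : seq nat) : seq nat * bool :=
  if s is x :: s' then
    let t := sort_sgn s' in let u := insert_sgn x t.1 in (u.1, t.2 (+) u.2)
  else ([::], false).

Lemma size_insert_sgn x s : size (insert_sgn x s).1 = (size s).+1.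
Proof. by elim: s => //= y s IHs; case: leqP => //= _; rewrite IHs. Qed.

Lemma size_sort_sgn s : size (sort_sgn s).1 = size s.
Proof. by elim: s => //= x s IHs; rewrite size_insert_sgn IHs. Qed.

Variables (R : pzRingType) (n : nat) (f : seq nat -> R).
Hypothesis f_swap : forall s t x y, size (s ++ x :: y :: t) = n ->
  f (s ++ y :: x :: t) = - f (s ++ x :: y :: t).

Lemma alt_insert_sgn pre x s : size (pre ++ x :: s) = n ->
  f (pre ++ x :: s) = (-1) ^+ (insert_sgn x s).2 * f (pre ++ (insert_sgn x s).1).
Proof.
elim: s pre => [|y s IHs] pre hn /=; first by rewrite mul1r.
case: leqP => _ /=; first by rewrite mul1r.
rewrite f_swap; last by rewrite -hn !size_cat.
rewrite signrN mulNr -cat_rcons IHs ?cat_rcons //.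
by rewrite -hn !size_cat.
Qed.

Lemma alt_sort_sgn pre s : size (pre ++ s) = n ->
  f (pre ++ s) = (-1) ^+ (sort_sgn s).2 * f (pre ++ (sort_sgn s).1).
Proof.
elim: s pre => [|x s IHs] pre /= hn; first by rewrite mul1r.
rewrite -cat_rcons IHs ?cat_rcons // alt_insert_sgn ?signr_addb ?mulrA //.
by rewrite -hn !size_cat /= size_sort_sgn.
Qed.

End AlternatingSort.

Lemma chi_sort_sgn (F : fieldType) (n : nat) (p : 'I_n.+1 -> 'rV[F]_5) s :
  size s = 6%N -> chi p s = (-1) ^+ (sort_sgn s).2 * chi p (sort_sgn s).1.
Proof. exact: (alt_sort_sgn (@chi_swap F n p) (pre := [::])). Qed.

(* Pivot F j k: F lies in a facet avoiding j and k, so chi (F ++ [:: j]) and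
   chi (F ++ [:: k]) have the same sign.  Exchange a x y z w: the sign of
   chi (a ++ [:: z; w]) forced by the Grassmann-Pluecker relation of chi_plucker,
   the other two terms of which have a known common sign. *)
Inductive sign_step :=
  | Pivot of seq nat & nat & nat
  | Exchange of seq nat & nat & nat & nat & nat.

Section SignPropagation.
Variable facets : seq (seq nat).

(* A fact (t, b) records sgr (X * chi t) = (-1) ^+ b for the nonzero value X of chi at
   the starting tuple; t is kept sorted so that facts are found up to reordering. *)
Definition lookup_sign (facts : seq (seq nat * bool)) (t : seq nat) : option bool :=
  if size t == 6%N then
    let u := sort_sgn t in ohead [seq u.2 (+) fact.2 | fact <- facts & fact.1 == u.1]
  else None.

Definition record_sign (t : seq nat) (b : bool) facts :=
  let u := sort_sgn t in (u.1, u.2 (+) b) :: facts.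

Definition pivot_ok (F : seq nat) (j k : nat) :=
  all (fun i => i < 14)%N [:: j, k & F] &&
  has (fun l => [&& all (mem l) F, j \notin l & k \notin l]) facets.

Definition derive_sign facts (st : sign_step) : option (seq nat * bool) :=
  match st with
  | Pivot F j k =>
      if pivot_ok F j k then omap (pair (F ++ [:: k])) (lookup_sign facts (F ++ [:: j]))
      else None
  | Exchange a x y z w =>
      match lookup_sign facts (a ++ [:: y; z]), lookup_sign facts (a ++ [:: x; w]),
            lookup_sign facts (a ++ [:: x; z]), lookup_sign facts (a ++ [:: y; w]),
            lookup_sign facts (a ++ [:: x; y]) with
      | Some a1, Some b1, Some a2, Some b2, Some a3 =>
          if a1 (+) b1 == ~~ (a2 (+) b2) then Some (a ++ [:: z; w], a3 (+) ~~ (a1 (+) b1))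
          else None
      | _, _, _, _, _ => None
      end
  end.

Fixpoint refutes facts (steps : seq sign_step) : bool :=
  if steps is st :: steps' then
    if derive_sign facts st is Some (t, b) then
      (lookup_sign facts t == Some (~~ b)) || refutes (record_sign t b facts) steps'
    else false
  else false.

Definition refutation (l : seq nat) (j : nat) (steps : seq sign_step) :=
  [&& l \in facets, size l == 5%N, all (fun i => i < 14)%N (j :: l), j \notin l
    & refutes (record_sign (l ++ [:: j]) false [::]) steps].

End SignPropagation.

Section SignRules.
Variable R : realFieldType.
Implicit Types (u v w x : R) (b : bool).

Lemma sgr_signM b x : sgr ((-1) ^+ b * x) = (-1) ^+ b * sgr x.
Proof. by rewrite sgrM; case: b; rewrite ?expr0 ?expr1 ?sgr1 ?sgrN1. Qed.

Lemma sgrM_common_factor x u v : x != 0 -> sgr (u * v) = sgr (x * u) * sgr (x * v).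
Proof. by move=> x0; rewrite !sgrM mulrACA -expr2 sgr_odd // expr0 mul1r. Qed.

Lemma sgr_pivot u v x w : x < 0 -> w < 0 -> u * x = v * w -> sgr u = sgr v.
Proof.
move=> x0 w0 /(congr1 sgr).
by rewrite !sgrM (ltr0_sg x0) (ltr0_sg w0) !mulrN1 => /oppr_inj.
Qed.

Lemma sgr_sum3 u v w b : u + v + w = 0 ->
  sgr u = (-1) ^+ b -> sgr v = (-1) ^+ b -> sgr w = (-1) ^+ (~~ b).
Proof.
move=> uvw /eqP hu /eqP hv; apply/eqP; move: hu hv.
by case: b; rewrite /= ?expr0 ?expr1 !sgr_cp0 => hu hv; lra.
Qed.

Lemma sgr_three_term x (a1 b1 a2 b2 a3 b3 : R) (e1 f1 e2 f2 e3 : bool) : x != 0 ->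
  a1 * b1 - a2 * b2 + a3 * b3 = 0 ->
  sgr (x * a1) = (-1) ^+ e1 -> sgr (x * b1) = (-1) ^+ f1 ->
  sgr (x * a2) = (-1) ^+ e2 -> sgr (x * b2) = (-1) ^+ f2 ->
  sgr (x * a3) = (-1) ^+ e3 -> e1 (+) f1 = ~~ (e2 (+) f2) ->
  sgr (x * b3) = (-1) ^+ (e3 (+) ~~ (e1 (+) f1)).
Proof.
move=> x0 pl sa1 sb1 sa2 sb2 sa3 e.
have s1 : sgr (a1 * b1) = (-1) ^+ (e1 (+) f1).
  by rewrite (sgrM_common_factor _ _ x0) sa1 sb1 signr_addb.
have s2 : sgr (- (a2 * b2)) = (-1) ^+ (e1 (+) f1).
  by rewrite sgrN (sgrM_common_factor _ _ x0) sa2 sb2 -signr_addb -signrN e.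
have := sgr_sum3 pl s1 s2; rewrite (sgrM_common_factor _ _ x0) sa3 => s3.
by rewrite signr_addb -s3 signrMK.
Qed.

End SignRules.

Section Realization.
Variables (R : realType) (p : 'I_14 -> 'rV[R]_5).

Lemma in_set_of_labels l i : (i < 14)%N -> (inord i \in set_of_labels l) = (i \in l).
Proof. by move=> hi; rewrite inE /= inordK. Qed.

Lemma exposed_face_heval S : exposed_face p S ->
  exists w, forall i, (i < 14)%N ->
    (inord i \in S -> heval p w i = 0) /\ (inord i \notin S -> heval p w i < 0).
Proof.
case=> c [d [_ [c_le c_eq]]].
have hevalE i : heval p (col_mx c^T (const_mx (- d))) i = dotp c (p (inord i)) - d.
  rewrite /heval /hpoint mul_row_col !mxE big_ord1 !mxE mul1r /dotp; congr (_ + _).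
  by apply: eq_bigr => k _; rewrite !mxE mulrC.
exists (col_mx c^T (const_mx (- d))) => i _; rewrite hevalE; split.
  by move/c_eq => ->; rewrite subrr.
move=> iS; rewrite subr_lt0 lt_neqAle c_le andbT.
by apply/eqP => /c_eq; apply/negP.
Qed.

Lemma chi_pivot l F j k : exposed_face p (set_of_labels l) -> size F = 5%N ->
  all (fun i => i < 14)%N [:: j, k & F] -> all (mem l) F -> j \notin l -> k \notin l ->
  sgr (chi p (F ++ [:: j])) = sgr (chi p (F ++ [:: k])).
Proof.
move=> /exposed_face_heval[w hw] hF /and3P[hj hk /allP F14] /allP Fl jl kl.
have hw0 f : f \in F -> heval p w f = 0.
  move=> hf; apply: (hw f (F14 f hf)).1.
  by rewrite in_set_of_labels ?F14 //; apply: Fl.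
apply: (sgr_pivot (x := heval p w k) (w := heval p w j)).
- by apply: (hw k hk).2; rewrite in_set_of_labels.
- by apply: (hw j hj).2; rewrite in_set_of_labels.
clear F14 Fl; case: F hF hw0 => [|f1 [|f2 [|f3 [|f4 [|f5 []]]]]] //= _ hw0.
have := chi_cramer7 p f1 f2 f3 f4 f5 j k w.
rewrite (hw0 f1) ?(hw0 f2) ?(hw0 f3) ?(hw0 f4) ?(hw0 f5) ?inE ?eqxx ?orbT //.
by rewrite !mulr0 => h; lra.
Qed.

Lemma chi_neq0 l j : is_facet p (set_of_labels l) -> size l = 5%N ->
  all (fun i => i < 14)%N (j :: l) -> j \notin l -> chi p (l ++ [:: j]) != 0.
Proof.
move=> [hexp hrk] hsz /andP[hj _] jl.
have [w hw] := exposed_face_heval hexp.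
set S := set_of_labels l.
set M := \matrix_(k < 6) hpoint p (nth 0%N (l ++ [:: j]) k).
have sub : (hom_mx p S <= M)%MS.
  apply/row_subP => i; rewrite rowK; case: ifP => iS; last by rewrite sub0mx.
  have il : val i \in l by move: iS; rewrite inE.
  have k5 : (index (val i) l < size l)%N by rewrite index_mem.
  rewrite hsz in k5.
  have k6 : (index (val i) l < 6)%N by apply: ltn_trans k5 _.
  have -> : row_mx (p i) (const_mx 1) = row (Ordinal k6) M.
    by rewrite rowK /hpoint nth_cat hsz /= k5 nth_index // inord_val.
  exact: row_sub.
have rk5 := mxrankS sub; rewrite hrk in rk5.
have [rk6|rkn6] := eqVneq (\rank M) 6%N.
  have : M \in unitmx by rewrite -row_free_unit /row_free rk6.
  by rewrite unitmxE unitfE.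
have rkM : \rank M = 5%N.
  by apply/eqP; rewrite eqn_leq rk5 andbT -ltnS ltn_neqAle rkn6 rank_leq_col.
have := mxrank_leqif_sup sub; rewrite hrk rkM => /leqif_refl MS.
have : (row 5 M <= hom_mx p S)%MS by apply: submx_trans (row_sub _ _) MS.
case/submxP => u hu.
have h0 : hom_mx p S *m w = 0.
  apply/row_matrixP => i; rewrite row_mul rowK row0.
  case: ifP => iS; last by rewrite mul0mx.
  have := (hw (val i) (ltn_ord i)).1; rewrite /heval /hpoint inord_val => e.
  by apply/rowP => z; rewrite ord1 e ?iS ?mxE.
have := (hw j hj).2; rewrite in_set_of_labels // jl => /(_ isT).
rewrite /heval (_ : hpoint p j = row 5 M); last by rewrite rowK /= nth_cat hsz.
by rewrite hu -mulmxA h0 mulmx0 mxE ltxx.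
Qed.

End Realization.

Section Soundness.
Variables (R : realType) (p : 'I_14 -> 'rV[R]_5) (facets : seq (seq nat)).
Hypothesis facetsP : forall l, l \in facets -> is_facet p (set_of_labels l).
Variable X : R.
Hypothesis X_neq0 : X != 0.

Definition facts_hold (facts : seq (seq nat * bool)) :=
  forall t b, (t, b) \in facts -> sgr (X * chi p t) = (-1) ^+ b.

Lemma lookup_signP facts t b : facts_hold facts -> lookup_sign facts t = Some b ->
  size t = 6%N /\ sgr (X * chi p t) = (-1) ^+ b.
Proof.
move=> hold; rewrite /lookup_sign; case: eqP => // ht hb; split=> //.
have : b \in [seq (sort_sgn t).2 (+) fact.2 | fact <- facts & fact.1 == (sort_sgn t).1].
  by move: hb; case: (X in ohead X) => //= c s [->]; exact: mem_head.
case/mapP=> [[u c]]; rewrite mem_filter /= => /andP[/eqP-> /hold hc] ->.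
by rewrite (chi_sort_sgn p ht) mulrCA sgr_signM hc signr_addb.
Qed.

Lemma record_signP facts t (b : bool) : facts_hold facts -> size t = 6%N ->
  sgr (X * chi p t) = (-1) ^+ b -> facts_hold (record_sign t b facts).
Proof.
move=> hold ht htb u c; rewrite inE => /orP[/eqP [-> ->]|/hold //].
by rewrite signr_addb -htb (chi_sort_sgn p ht) mulrCA sgr_signM signrMK.
Qed.

Lemma derive_signP facts st t b : facts_hold facts ->
  derive_sign facets facts st = Some (t, b) ->
  size t = 6%N /\ sgr (X * chi p t) = (-1) ^+ b.
Proof.
move=> hold; case: st => [F j k | a x y z w] /=.
  case: ifP => // /andP[F14 /hasP[l lf /and3P[Fl jl kl]]].
  case E: lookup_sign => [c|] //= [<- <-]; have [hs hc] := lookup_signP hold E.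
  move: hs; rewrite !size_cat addn1 => -[hF]; split; first by rewrite hF.
  by rewrite sgrM -(chi_pivot (facetsP lf).1 hF F14 Fl jl kl) -sgrM.
case E1: lookup_sign => [a1|] //; case E2: lookup_sign => [b1|] //.
case E3: lookup_sign => [a2|] //; case E4: lookup_sign => [b2|] //.
case E5: lookup_sign => [a3|] //; case: eqP => // e [<- <-].
have [ha sA1] := lookup_signP hold E1; have [_ sB1] := lookup_signP hold E2.
have [_ sA2] := lookup_signP hold E3; have [_ sB2] := lookup_signP hold E4.
have [_ sA3] := lookup_signP hold E5.
move: ha; rewrite size_cat addn2 => -[ha]; rewrite size_cat ha; split=> //.
clear E1 E2 E3 E4 E5.
case: a ha sA1 sB1 sA2 sB2 sA3 => [|c1 [|c2 [|c3 [|c4 []]]]] //= _ sA1 sB1 sA2 sB2 sA3.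
exact: sgr_three_term X_neq0 (chi_plucker p _ _ _ _ _ _ _ _) sA1 sB1 sA2 sB2 sA3 e.
Qed.

Lemma refutesP steps facts : facts_hold facts -> ~~ refutes facets facts steps.
Proof.
elim: steps facts => //= st steps IHsteps facts hold.
case E: derive_sign => [[t b]|] //; have [ht htb] := derive_signP hold E.
rewrite negb_or IHsteps ?andbT; last exact: record_signP.
apply/eqP => /(lookup_signP hold) [_]; rewrite htb => /signr_inj.
by case: (b).
Qed.

End Soundness.

Theorem refutation_sound (R : realType) (p : 'I_14 -> 'rV[R]_5) facets l j steps :
  (forall l, l \in facets -> is_facet p (set_of_labels l)) ->
  refutation facets l j steps -> False.
Proof.
move=> facetsP /and5P[lf /eqP hl hj jl].
have X0 := chi_neq0 (facetsP _ lf) hl hj jl.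
apply/negP/(refutesP facetsP X0)/record_signP => //; first by rewrite size_cat hl.
by rewrite sgrM -expr2 sgr_odd.
Qed.

Definition Pi_refutation : seq sign_step :=
  [:: Pivot [:: 0; 1; 2; 3; 4] 10 12;
      Pivot [:: 0; 1; 2; 3; 4] 10 9;
      Pivot [:: 0; 1; 2; 3; 4] 10 11;
      Pivot [:: 0; 1; 3; 4; 11] 2 7;
      Pivot [:: 0; 1; 3; 7; 11] 4 12;
      Pivot [:: 0; 1; 3; 7; 12] 11 2;
      Pivot [:: 0; 1; 2; 3; 4] 10 7;
      Pivot [:: 0; 1; 2; 3; 10] 4 8;
      Pivot [:: 0; 1; 3; 8; 10] 2 13;
      Pivot [:: 0; 1; 3; 8; 13] 10 9;
      Pivot [:: 0; 1; 3; 9; 13] 8 12;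
      Pivot [:: 0; 1; 3; 9; 12] 13 2;
      Exchange [:: 0; 1; 2; 3] 4 12 7 9;
      Pivot [:: 0; 1; 2; 3; 10] 4 6;
      Pivot [:: 0; 1; 2; 6; 10] 3 9;
      Pivot [:: 1; 2; 6; 9; 10] 0 4;
      Pivot [:: 1; 2; 4; 9; 10] 6 7;
      Pivot [:: 1; 2; 4; 7; 9] 10 0;
      Pivot [:: 0; 1; 3; 7; 11] 4 2;
      Pivot [:: 0; 1; 4; 7; 11] 3 2;
      Exchange [:: 0; 1; 2; 7] 3 4 9 11;
      Pivot [:: 0; 2; 3; 4; 11] 1 7;
      Pivot [:: 0; 2; 4; 7; 11] 3 5;
      Pivot [:: 0; 2; 5; 7; 11] 4 1;
      Pivot [:: 0; 1; 2; 3; 10] 4 5;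
      Pivot [:: 0; 1; 2; 3; 5] 10 7;
      Exchange [:: 0; 1; 2; 7] 3 11 5 9;
      Pivot [:: 0; 1; 3; 4; 11] 2 5;
      Pivot [:: 0; 1; 3; 4; 5] 11 12;
      Pivot [:: 0; 1; 4; 5; 12] 3 9;
      Pivot [:: 0; 1; 5; 9; 12] 4 2;
      Pivot [:: 0; 1; 2; 3; 5] 10 9;
      Pivot [:: 1; 2; 4; 7; 9] 10 12;
      Pivot [:: 1; 2; 7; 9; 12] 4 0;
      Exchange [:: 0; 1; 2; 9] 3 5 7 12].

Lemma Pi_refutation_ok :
  refutation (simplicial_facets ++ base_facets) [:: 0; 1; 2; 3; 10] 4 Pi_refutation.
Proof. by []. Qed.

Theorem mainTheorem4 (R : realType) (p : 'I_14 -> 'rV[R]_5) :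
  ~ realizes_Pi p.
Proof.
case=> _ _ facetP; apply: (refutation_sound _ Pi_refutation_ok) => l hl.
exact/facetP/map_f.
Qed.
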